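(* Let $\Phi$ be the closure $cl(\varphi_0)$ of a formula, $M^*$ the canonical model for $\Phi$, and $\Gamma,\Delta\in W^*$. If the formula $\bigwedge\Gamma\wedge\neg[\approx]_iI_i\neg\bigwedge\Delta$ is consistent (i.e. its negation is not provable in $\mathbf{AIL}$), then $(\Gamma,\Delta)\in\sim_i^*\circ\approx_i^*$.
   Context: $\mathcal{L}_{AIL}$: $\varphi::=p\mid\neg\varphi\mid\varphi\wedge\varphi\mid A_i\varphi\mid I_i\varphi\mid E_i\varphi\mid[\approx]_i\varphi\mid[\circ^+]_i\varphi$ (countable atoms, finite agent set). Hilbert system $\mathbf{AIL}$: axioms — propositional tautologies; $A_i\varphi\leftrightarrow A_i\neg\varphi$; $A_i(\varphi\wedge\psi)\leftrightarrow A_i\varphi\wedge A_i\psi$; $A_i\varphi\leftrightarrow A_iO_j\varphi$ for $O_j\in\{A_j,I_j,[\approx]_j,[\circ^+]_j,E_j\}$; $A_i\varphi\to I_iA_i\varphi$; $\neg A_i\varphi\to I_i\neg A_i\varphi$; $A_ip\wedge p\to[\approx]_ip$; for $\Box\in\{I_i,[\approx]_i\}$: $\Box(\varphi\to\psi)\to(\Box\varphi\to\Box\psi)$, $\Box\varphi\to\varphi$, $\neg\Box\varphi\to\Box\neg\Box\varphi$; $[\circ^+]_i(\varphi\to\psi)\to([\circ^+]_i\varphi\to[\circ^+]_i\psi)$; $[\circ^+]_i\varphi\to\varphi\wedge[\approx]_iI_i[\circ^+]_i\varphi$; $[\circ^+]_i(\varphi\to[\approx]_iI_i\varphi)\to(\varphi\to[\circ^+]_i\varphi)$;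 $E_i\varphi\leftrightarrow A_i\varphi\wedge[\circ^+]_i\varphi$; rules: modus ponens, necessitation for $I_i,[\approx]_i,[\circ^+]_i$. $\Gamma\vdash\varphi$ iff $\vdash\bigwedge\Gamma'\to\varphi$ for some finite $\Gamma'\subseteq\Gamma$. $cl(\varphi_0)$ is the smallest (finite) set containing $\varphi_0$ closed under: subformulas; $\neg\psi$ for non-negations $\psi$; $A_i\psi\Rightarrow A_i\chi$ for subformulas $\chi$ of $\psi$; $A_i\psi\Rightarrow I_iA_i\psi,I_i\neg A_i\psi,[\approx]_ip$ for atoms $p$ in $\psi$; $I_i\psi\Rightarrow I_iI_i\psi,I_i\neg I_i\psi$ unless $\psi$ is $I_i\chi$ or $\neg I_i\chi$; analogously for $[\approx]_i$; $[\circ^+]_i\psi\Rightarrow[\approx]_iI_i[\circ^+]_i\psi$; $E_i\psi\Rightarrow A_i\psi,[\circ^+]_i\psi$. $W^*$ is the set of maximal consistent sets in $\Phi$ (subsets $\Gamma\subseteq\Phi$ with $\Gamma\nvdash\bot$ not properly extendable within $\Phi$); $\bigwedge\Gamma$ is the conjunction of the (finitely many) elements of $\Gamma$. $(\Gamma,\Delta)\in\sim_i^*$ iff $\{\psi:I_i\psi\in\Gamma\}\subseteq\Delta$; $(\Gamma,\Delta)\in\approx_i^*$ iff $\{\psi:[\approx]_i\psi\in\Gamma\}\subseteq\Delta$; $\sim_i^*\circ\approx_i^*=\{(\Gamma,\Delta):\exists\Theta\in W^*\,((\Gamma,\Theta)\in\approx_i^*,(\Theta,\Delta)\in\sim_i^*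 )\}$. *)

From Stdlib Require Import List.
From mathcomp Require Import ssreflect ssrbool eqtype choice fintype.

Set Implicit Arguments.

Inductive form (Ag : Type) : Type :=
| Atom : nat -> form Ag
| Neg  : form Ag -> form Ag
| And  : form Ag -> form Ag -> form Ag
| Aw   : Ag -> form Ag -> form Ag
| Kn   : Ag -> form Ag -> form Ag   (* I_i *)
| Ex   : Ag -> form Ag -> form Ag
| Ind  : Ag -> form Ag -> form Ag   (* [~~]_i  (the [approx]_i modality) *)
| Cp   : Ag -> form Ag -> form Ag.

Arguments Atom {Ag} _.

Definition Imp {Ag} (a b : form Ag) : form Ag := Neg (And a (Neg b)).
Definition Iff {Ag} (a b : form Ag) : form Ag := And (Imp a b) (Imp b a).
Definition Top {Ag} : form Ag := Neg (And (Atom 0) (Neg (Atom 0))).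
Definition Bot {Ag} : form Ag := Neg Top.

(* Propositional tautologies: true under every boolean valuation of the
   propositional atoms and of the modal formulas (treated as atoms). *)
Fixpoint teval {Ag} (v : form Ag -> bool) (f : form Ag) : bool :=
  match f with
  | Neg a => negb (teval v a)
  | And a b => teval v a && teval v b
  | _ => v f
  end.
Definition tautology {Ag} (f : form Ag) : Prop := forall v, teval v f = true.

Inductive Prov {Ag : Type} : form Ag -> Prop :=
| ax_taut f : tautology f -> Prov f
| ax_A_neg i f : Prov (Iff (Aw i f) (Aw i (Neg f)))
| ax_A_and i f g : Prov (Iff (Aw i (And f g)) (And (Aw i f) (Aw i g)))
| ax_A_A i j f : Prov (Iff (Aw i f) (Aw i (Aw j f)))
| ax_A_I i j f : Prov (Iff (Aw i f) (Aw i (Kn j f)))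
| ax_A_Ind i j f : Prov (Iff (Aw i f) (Aw i (Ind j f)))
| ax_A_Cp i j f : Prov (Iff (Aw i f) (Aw i (Cp j f)))
| ax_A_E i j f : Prov (Iff (Aw i f) (Aw i (Ex j f)))
| ax_A_IA i f : Prov (Imp (Aw i f) (Kn i (Aw i f)))
| ax_nA_InA i f : Prov (Imp (Neg (Aw i f)) (Kn i (Neg (Aw i f))))
| ax_A_atom i p : Prov (Imp (And (Aw i (Atom p)) (Atom p)) (Ind i (Atom p)))
| ax_K_I i f g : Prov (Imp (Kn i (Imp f g)) (Imp (Kn i f) (Kn i g)))
| ax_T_I i f : Prov (Imp (Kn i f) f)
| ax_5_I i f : Prov (Imp (Neg (Kn i f)) (Kn i (Neg (Kn i f))))
| ax_K_Ind i f g : Prov (Imp (Ind i (Imp f g)) (Imp (Ind i f) (Ind i g)))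
| ax_T_Ind i f : Prov (Imp (Ind i f) f)
| ax_5_Ind i f : Prov (Imp (Neg (Ind i f)) (Ind i (Neg (Ind i f))))
| ax_K_Cp i f g : Prov (Imp (Cp i (Imp f g)) (Imp (Cp i f) (Cp i g)))
| ax_Cp_mix i f : Prov (Imp (Cp i f) (And f (Ind i (Kn i (Cp i f)))))
| ax_Cp_ind i f : Prov (Imp (Cp i (Imp f (Ind i (Kn i f)))) (Imp f (Cp i f)))
| ax_E i f : Prov (Iff (Ex i f) (And (Aw i f) (Cp i f)))
| r_mp f g : Prov (Imp f g) -> Prov f -> Prov g
| r_nec_I i f : Prov f -> Prov (Kn i f)
| r_nec_Ind i f : Prov f -> Prov (Ind i f)
| r_nec_Cp i f : Prov f -> Prov (Cp i f).

Fixpoint bigconj {Ag} (l : list (form Ag)) : form Ag :=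
  match l with
  | nil => Top
  | cons a l' => And a (bigconj l')
  end.

Definition Deriv {Ag} (G : form Ag -> Prop) (f : form Ag) : Prop :=
  exists l : list (form Ag), (forall x, List.In x l -> G x) /\ Prov (Imp (bigconj l) f).

Definition enumerates {Ag} (l : list (form Ag)) (G : form Ag -> Prop) : Prop :=
  forall x, List.In x l <-> G x.

Inductive subf {Ag} : form Ag -> form Ag -> Prop :=
| subf_refl f : subf f f
| subf_neg c f : subf c f -> subf c (Neg f)
| subf_andl c f g : subf c f -> subf c (And f g)
| subf_andr c f g : subf c g -> subf c (And f g)
| subf_Aw c i f : subf c f -> subf c (Aw i f)
| subf_Kn c i f : subf c f -> subf c (Kn i f)
| subf_Ex c i f : subf c f -> subf c (Ex i f)
| subf_Ind c i f : subf c f -> subf c (Ind i f)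
| subf_Cp c i f : subf c f -> subf c (Cp i f).

Definition is_neg {Ag} (f : form Ag) : Prop := exists g, f = Neg g.

Inductive cl {Ag} (phi0 : form Ag) : form Ag -> Prop :=
| cl_base : cl phi0 phi0
| cl_sub f g : cl phi0 f -> subf g f -> cl phi0 g
| cl_negate f : cl phi0 f -> ~ is_neg f -> cl phi0 (Neg f)
| cl_A_sub i f g : cl phi0 (Aw i f) -> subf g f -> cl phi0 (Aw i g)
| cl_A_IA i f : cl phi0 (Aw i f) -> cl phi0 (Kn i (Aw i f))
| cl_A_InA i f : cl phi0 (Aw i f) -> cl phi0 (Kn i (Neg (Aw i f)))
| cl_A_atom i f p : cl phi0 (Aw i f) -> subf (Atom p) f -> cl phi0 (Ind i (Atom p))
| cl_I_II i f : cl phi0 (Kn i f) ->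
    ~ (exists g, f = Kn i g \/ f = Neg (Kn i g)) -> cl phi0 (Kn i (Kn i f))
| cl_I_InI i f : cl phi0 (Kn i f) ->
    ~ (exists g, f = Kn i g \/ f = Neg (Kn i g)) -> cl phi0 (Kn i (Neg (Kn i f)))
| cl_Ind_II i f : cl phi0 (Ind i f) ->
    ~ (exists g, f = Ind i g \/ f = Neg (Ind i g)) -> cl phi0 (Ind i (Ind i f))
| cl_Ind_InI i f : cl phi0 (Ind i f) ->
    ~ (exists g, f = Ind i g \/ f = Neg (Ind i g)) -> cl phi0 (Ind i (Neg (Ind i f)))
| cl_Cp i f : cl phi0 (Cp i f) -> cl phi0 (Ind i (Kn i (Cp i f)))
| cl_E_A i f : cl phi0 (Ex i f) -> cl phi0 (Aw i f)
| cl_E_Cp i f : cl phi0 (Ex i f) -> cl phi0 (Cp i f).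

(* W^*: maximal consistent sets in Phi *)
Definition mcs_in {Ag} (Phi G : form Ag -> Prop) : Prop :=
  (forall x, G x -> Phi x) /\ ~ Deriv G Bot /\
  (forall G' : form Ag -> Prop,
     (forall x, G x -> G' x) -> (forall x, G' x -> Phi x) -> ~ Deriv G' Bot ->
     forall x, G' x -> G x).

Definition simR {Ag} (i : Ag) (G D : form Ag -> Prop) : Prop :=
  forall f, G (Kn i f) -> D f.
Definition approxR {Ag} (i : Ag) (G D : form Ag -> Prop) : Prop :=
  forall f, G (Ind i f) -> D f.
(* sim_i^* o approx_i^* = {(G,D) : exists Theta in W^*, G approx Theta, Theta sim D} *)
Definition sim_o_approx {Ag} (Phi : form Ag -> Prop) (i : Ag) (G D : form Ag -> Prop) : Prop :=
  exists T, mcs_in Phi T /\ approxR i G T /\ simR i T D.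

(* Write χ := I_i ¬⋀Δ.  The seed S := {ψ | [≈]_i ψ ∈ Γ} ∪ {¬I_i c | I_i c ∈ Φ, c ∉ Δ} is consistent:
   for c ∉ Δ maximality of Δ gives ⊢ c → ¬⋀Δ, hence ⊢ I_i c → χ; so if ⊢ ¬⋀l for a finite l ⊆ S,
   distributing [≈]_i over l yields ⊢ ⋀Γ → [≈]_i χ, against the hypothesis.  A Lindenbaum extension Θ
   of S inside Φ satisfies Γ ≈_i Θ by construction, and Θ ∼_i Δ because I_i ψ ∈ Θ with ψ ∉ Δ would
   put both I_i ψ and ¬I_i ψ into Θ. *)

From Stdlib Require Import List Classical.
From mathcomp Require Import ssreflect ssrfun ssrbool eqtype ssrnat choice fintype.

Set Implicit Arguments.
Unset Strict Implicit.

Ltac by_truth_table :=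
  let v := fresh "v" in
  move=> v; rewrite /Imp /=;
  repeat match goal with
         | |- context [teval v ?x] => case: (teval v x)
         | |- context [v ?x] => case: (v x)
         end; by [].

Section Propositional.
Variable Ag : Type.
Implicit Types (a b c : form Ag) (l : list (form Ag)).

Lemma teval_bigconj v l :
  teval v (bigconj l) = true <-> (forall x, In x l -> teval v x = true).
Proof.
elim: l => [|a l IHl] /=.
  by split=> // _; case: (v (Atom 0)).
split=> [/andP[va vl] x [<-|xl] // | vl]; first exact: IHl.1.
by rewrite vl /=; [apply/IHl => x xl; apply: vl; right | left].
Qed.

Lemma Prov_taut_mp a b : Prov a -> tautology (Imp a b) -> Prov b.
Proof. by move=> pa /ax_taut/r_mp; apply. Qed.

Lemma Prov_taut_mp2 a b c :
  Prov a -> Prov b -> tautology (Imp a (Imp b c)) -> Prov c.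
Proof. by move=> pa pb /ax_taut/r_mp/(_ pa)/r_mp; apply. Qed.

Lemma Prov_bigconj_In l x : In x l -> Prov (Imp (bigconj l) x).
Proof.
move=> xl; apply: ax_taut => v; rewrite /Imp /=.
by case vl: (teval v (bigconj l)); rewrite //= (teval_bigconj v l).1.
Qed.

End Propositional.

Section NormalModality.
Variables (Ag : Type) (box : form Ag -> form Ag).
Hypothesis box_K : forall a b, Prov (Imp (box (Imp a b)) (Imp (box a) (box b))).
Hypothesis box_nec : forall a, Prov a -> Prov (box a).

Lemma box_mono a b : Prov (Imp a b) -> Prov (Imp (box a) (box b)).
Proof. by move/box_nec; apply: r_mp. Qed.

Lemma box_imp2 g a b c : Prov (Imp g (box a)) -> Prov (Imp g (box b)) ->
  Prov (Imp a (Imp b c)) -> Prov (Imp g (box c)).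
Proof.
move=> ga gb /box_mono abc.
have bc := box_K b c.
have gbc : Prov (Imp g (box (Imp b c))) by apply: (Prov_taut_mp2 ga abc _); by_truth_table.
have gbbc : Prov (Imp g (Imp (box b) (box c))) by apply: (Prov_taut_mp2 gbc bc _); by_truth_table.
by apply: (Prov_taut_mp2 gb gbbc _); by_truth_table.
Qed.

End NormalModality.

Section MaximalConsistent.
Variable Ag : Type.
Implicit Types (Phi S T D : form Ag -> Prop) (c f : form Ag).

Lemma Deriv_mono S T f : (forall x, S x -> T x) -> Deriv S f -> Deriv T f.
Proof. by move=> ST [l [lS pl]]; exists l; split=> // x /lS/ST. Qed.

Lemma mcs_in_noncontradictory Phi T f : mcs_in Phi T -> T f -> T (Neg f) -> False.
Proof.
move=> [_ [Tcons _]] Tf Tnf; apply: Tcons.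
exists (f :: Neg f :: nil); split; last by apply: ax_taut; by_truth_table.
by move=> x [<-|[<-|[]]].
Qed.

Lemma mcs_in_extend_inconsistent Phi D c :
  mcs_in Phi D -> Phi c -> ~ D c -> Deriv (fun y => D y \/ y = c) Bot.
Proof.
move=> [DPhi [_ Dmax]] Phic Dc; apply: NNPP => cons; apply: Dc.
apply: (Dmax (fun y => D y \/ y = c)) => //; last by right.
- by move=> y; left.
- by move=> y [/DPhi|->].
Qed.

Lemma mcs_in_refutes_outside Phi D lD c : mcs_in Phi D -> enumerates lD D ->
  Phi c -> ~ D c -> Prov (Imp c (Neg (bigconj lD))).
Proof.
move=> mD eD Phic Dc.
have [l [lDc pl]] := mcs_in_extend_inconsistent mD Phic Dc.
apply: (Prov_taut_mp pl) => v; rewrite /Imp /=.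
case vc: (teval v c); case vD: (teval v (bigconj lD)); rewrite /= ?andbF //.
have -> : teval v (bigconj l) = true.
  apply/teval_bigconj => x /lDc [/eD xD | -> //].
  exact: (teval_bigconj v lD).1 vD x xD.
by case: (v (Atom 0)).
Qed.

End MaximalConsistent.

Section Lindenbaum.
Variable Ag : countType.

Fixpoint form_tree (f : form Ag) : GenTree.tree (nat + Ag) :=
  match f with
  | Atom p => GenTree.Leaf (inl p)
  | Neg a => GenTree.Node 0 (form_tree a :: nil)
  | And a b => GenTree.Node 1 (form_tree a :: form_tree b :: nil)
  | Aw j a => GenTree.Node 2 (GenTree.Leaf (inr j) :: form_tree a :: nil)
  | Kn j a => GenTree.Node 3 (GenTree.Leaf (inr j) :: form_tree a :: nil)
  | Ex j a => GenTree.Node 4 (GenTree.Leaf (inr j) :: form_tree a :: nil)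
  | Ind j a => GenTree.Node 5 (GenTree.Leaf (inr j) :: form_tree a :: nil)
  | Cp j a => GenTree.Node 6 (GenTree.Leaf (inr j) :: form_tree a :: nil)
  end.

Lemma form_tree_inj : injective form_tree.
Proof.
elim=> [p|a IHa|a IHa b IHb|j a IHa|j a IHa|j a IHa|j a IHa|j a IHa] [] //=
  => [q|c|c d|k c|k c|k c|k c|k c] [];
  by [move->|move/IHa->|move=> /IHa-> /IHb->|move=> -> /IHa->].
Qed.

Definition form_code (f : form Ag) : nat := pickle (form_tree f).

Lemma form_code_inj : injective form_code.
Proof. by move=> f g /(pcan_inj pickleK)/form_tree_inj. Qed.

Variables (Phi S : form Ag -> Prop).

Fixpoint stage n : form Ag -> Prop :=
  match n with
  | 0 => S
  | n.+1 => fun x => stage n x \/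
      [/\ form_code x = n, Phi x & ~ Deriv (fun y => stage n y \/ y = x) Bot]
  end.

Definition stage_union x : Prop := exists n, stage n x.

Lemma stage_mono m n x : m <= n -> stage m x -> stage n x.
Proof.
elim: n => [|n IHn]; first by rewrite leqn0 => /eqP->.
by rewrite leq_eqVlt ltnS => /orP[/eqP-> // | /IHn mn /mn]; left.
Qed.

Hypothesis S_Phi : forall x, S x -> Phi x.
Hypothesis S_consistent : ~ Deriv S Bot.

Lemma stage_Phi n x : stage n x -> Phi x.
Proof. by elim: n x => [|n IHn] x /=; [apply: S_Phi | case=> [/IHn|[]]]. Qed.

Lemma stage_consistent n : ~ Deriv (stage n) Bot.
Proof.
(* Injectivity of the code means that stage n.+1 adds at most the formula coded n. *)
elim: n => [|n IHn] //= stage_incons.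
have [[x [xn _ consx]] | none] :=
  classic (exists x, [/\ form_code x = n, Phi x & ~ Deriv (fun y => stage n y \/ y = x) Bot]).
- apply: consx; apply: Deriv_mono stage_incons => y [|[yn _ _]]; first by left.
  by right; apply: form_code_inj; rewrite xn yn.
- apply: IHn; apply: Deriv_mono stage_incons => y [//|y_new].
  by case: none; exists y.
Qed.

Lemma stage_union_finite l : (forall x, In x l -> stage_union x) ->
  exists n, forall x, In x l -> stage n x.
Proof.
elim: l => [|a l IHl] al; first by exists 0.
have [m am] := al a (or_introl erefl).
have [n ln] := IHl (fun x xl => al x (or_intror xl)).
exists (maxn m n) => x [<-|xl].
- exact: stage_mono (leq_maxl m n) am.
- exact: stage_mono (leq_maxr m n) (ln x xl).
Qed.

Lemma stage_union_mcs_in : mcs_in Phi stage_union.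
Proof.
split; [|split].
- by move=> x [n /stage_Phi].
- move=> [l [lU pl]]; have [n ln] := stage_union_finite lU.
  by apply: (@stage_consistent n); exists l.
- move=> T UT TPhi Tcons x Tx; exists (form_code x).+1; right.
  split=> //; first exact: TPhi.
  move=> incons; apply: Tcons; apply: Deriv_mono incons => y [yx|->] //.
  by apply: UT; exists (form_code x).
Qed.

End Lindenbaum.

Lemma lindenbaum (Ag : countType) (Phi S : form Ag -> Prop) :
  (forall x, S x -> Phi x) -> ~ Deriv S Bot ->
  exists T, mcs_in Phi T /\ (forall x, S x -> T x).
Proof.
move=> S_Phi S_cons; exists (stage_union Phi S); split.
- exact: stage_union_mcs_in.
- by move=> x Sx; exists 0.
Qed.

Section WitnessSeed.
Variables (Ag : Type) (phi0 : form Ag) (i : Ag).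
Variables (G D : form Ag -> Prop) (lG lD : list (form Ag)).
Hypotheses (mcs_G : mcs_in (cl phi0) G) (mcs_D : mcs_in (cl phi0) D).
Hypotheses (enum_G : enumerates lG G) (enum_D : enumerates lD D).

Local Notation Kn_not_D := (Kn i (Neg (bigconj lD))).

Definition witness_seed (x : form Ag) : Prop :=
  G (Ind i x) \/ exists c, [/\ x = Neg (Kn i c), cl phi0 (Kn i c) & ~ D c].

Lemma witness_seed_cl x : witness_seed x -> cl phi0 x.
Proof.
case=> [/mcs_G.1 Gx | [c [-> clc _]]].
- by apply: cl_sub Gx _; apply/subf_Ind/subf_refl.
- by apply: cl_negate clc _ => -[].
Qed.

Lemma Kn_not_in_D_imp c : cl phi0 (Kn i c) -> ~ D c -> Prov (Imp (Kn i c) Kn_not_D).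
Proof.
move=> clc Dc; apply: box_mono (@ax_K_I _ i) (@r_nec_I _ i) _ _ _.
by apply: mcs_in_refutes_outside mcs_D enum_D _ Dc; apply: cl_sub clc _; apply/subf_Kn/subf_refl.
Qed.

Lemma witness_seed_Ind x : witness_seed x ->
  Prov (Imp (bigconj lG) (Ind i (Imp (Neg x) Kn_not_D))).
Proof.
case=> [Gx | [c [-> clc Dc]]].
- have ind_x : Prov (Imp (Ind i x) (Ind i (Imp (Neg x) Kn_not_D))).
    apply: (box_mono (@ax_K_Ind _ i) (@r_nec_Ind _ i)).
    by apply: ax_taut; by_truth_table.
  have G_x := Prov_bigconj_In ((enum_G _).2 Gx).
  by apply: (Prov_taut_mp2 G_x ind_x _); by_truth_table.
- have nnKn_c : Prov (Imp (Neg (Neg (Kn i c))) Kn_not_D).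
    by apply: (Prov_taut_mp (Kn_not_in_D_imp clc Dc) _); by_truth_table.
  by apply: (Prov_taut_mp (r_nec_Ind i nnKn_c) _); by_truth_table.
Qed.

Lemma witness_seed_list_Ind l : (forall x, In x l -> witness_seed x) ->
  Prov (Imp (bigconj lG) (Ind i (Imp (Neg (bigconj l)) Kn_not_D))).
Proof.
elim: l => [|a l IHl] seed_l /=.
  have top_N : Prov (Ind i (Imp (Neg Top) Kn_not_D)).
    by apply/r_nec_Ind/ax_taut; by_truth_table.
  by apply: (Prov_taut_mp top_N _); by_truth_table.
have seed_a := witness_seed_Ind (seed_l a (or_introl erefl)).
have seed_rest := IHl (fun x xl => seed_l x (or_intror xl)).
apply: (box_imp2 (@ax_K_Ind _ i) (@r_nec_Ind _ i) seed_a seed_rest).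
by apply: ax_taut; by_truth_table.
Qed.

Hypothesis G_not_Ind_consistent :
  ~ Prov (Neg (And (bigconj lG) (Neg (Ind i Kn_not_D)))).

Lemma witness_seed_consistent : ~ Deriv witness_seed Bot.
Proof.
move=> [l [seed_l incons]]; apply: G_not_Ind_consistent.
have Ind_l : Prov (Ind i (Neg (bigconj l))).
  by apply/r_nec_Ind; apply: (Prov_taut_mp incons _); by_truth_table.
have G_K : Prov (Imp (bigconj lG) (Imp (Ind i (Neg (bigconj l))) (Ind i Kn_not_D))).
  have K_l := ax_K_Ind i (Neg (bigconj l)) Kn_not_D.
  by apply: (Prov_taut_mp2 (witness_seed_list_Ind seed_l) K_l _); by_truth_table.
by apply: (Prov_taut_mp2 Ind_l G_K _); by_truth_table.
Qed.

End WitnessSeed.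

Theorem lemma10 (Ag : finType) (phi0 : form Ag) (i : Ag)
  (G D : form Ag -> Prop) (lG lD : list (form Ag)) :
  mcs_in (cl phi0) G -> mcs_in (cl phi0) D ->
  enumerates lG G -> enumerates lD D ->
  ~ Prov (Neg (And (bigconj lG) (Neg (Ind i (Kn i (Neg (bigconj lD))))))) ->
  sim_o_approx (cl phi0) i G D.
Proof.
move=> mcs_G mcs_D enum_G enum_D G_not_Ind_consistent.
have [T [mcs_T seed_T]] := lindenbaum (witness_seed_cl mcs_G)
  (witness_seed_consistent mcs_D enum_G enum_D G_not_Ind_consistent).
exists T; split=> //; split=> [f Gf | f Tf]; first by apply: seed_T; left.
apply: NNPP => Df; apply: (mcs_in_noncontradictory mcs_T Tf); apply: seed_T; right.
by exists f; split=> //; apply: mcs_T.1 Tf.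
Qed.
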